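(* If $G$ is a connected cubic (3-regular) graph of order $n$ with $G \not\cong K_{3,3}$, then $\gamma_{\rm gr}^t(G) \ge \frac{1}{2}n$.
   Context: $N(v)$ denotes the open neighborhood of $v$. A sequence $S=(v_1,\ldots,v_k)$ of distinct vertices of a graph $G$ without isolated vertices is a legal sequence if $N(v_i)\setminus \bigcup_{j=1}^{i-1} N(v_j)\neq\emptyset$ for every $i\in\{2,\ldots,k\}$, and a total dominating sequence if moreover $\{v_1,\ldots,v_k\}$ is a total dominating set of $G$. $\gamma_{\rm gr}^t(G)$ is the maximum length of a total dominating sequence of $G$. *)

From mathcomp Require Import all_boot.
Set Implicit Arguments. Unset Strict Implicit. Unset Printing Implicit Defensive.

Section Graphs.
Variable T : finType.
Variable adj : rel T.

Definition simple_graph : Prop := symmetric adj /\ irreflexive adj.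

Definition N (v : T) : {set T} := [set u | adj v u].

Definition cubic : Prop := forall v, #|N v| = 3.

Definition connected_graph : Prop := forall x y : T, connect adj x y.

Definition NU (s : seq T) : {set T} := \bigcup_(v <- s) N v.

Definition legal_seq (s : seq T) : bool :=
  uniq s &&
  [forall i : 'I_(size s),
     (0 < i) ==> (N (tnth (in_tuple s) i) :\: NU (take i s) != set0)].

Definition total_dominating (S : {set T}) : bool :=
  [forall v : T, [exists u in S, adj v u]].

Definition total_dominating_seq (s : seq T) : bool :=
  legal_seq s && total_dominating [set x in s].

(* gamma_gr^t(G): maximum length of a total dominating sequence
   (lengths are bounded by #|T| since the vertices are distinct) *)
Definition gamma_grt : nat :=
  \max_(k < #|T|.+1 | [exists t : k.-tuple T, total_dominating_seq t]) k.
End Graphs.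

Definition K33_adj : rel (bool * 'I_3) := fun x y => x.1 != y.1.

Definition isomorphic (T1 T2 : finType) (a1 : rel T1) (a2 : rel T2) : Prop :=
  exists f : T1 -> T2, bijective f /\ forall x y, a2 (f x) (f y) = a1 x y.

(* Grow a legal sequence s greedily and follow 2|s| + |U|, where U is the set
   of vertices not yet totally dominated by s.  Adding a vertex whose
   neighbourhood meets U in one or two vertices does not decrease this
   quantity, and such a vertex exists unless U is stuck: every neighbourhood
   lies inside U or misses it.  In a connected cubic graph every edge crosses a
   stuck U other than V, so a stuck set contains no smaller stuck set, and a
   stuck set of size 3 forces G = K_{3,3}.  Hence the one step covering three
   vertices at once costs 1 and happens at most once.  If G has no twins
   (distinct vertices with equal neighbourhoods), the last one or two
   undominated vertices can be covered one at a time, which gains 1; otherwise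
   two vertices with two common neighbours give a start with |U| = n - 4.
   Either way 2 gamma_gr^t >= n - 1, and n is even. *)

From Pilot Require Import Defs.
From mathcomp Require Import all_boot zify.
Set Implicit Arguments. Unset Strict Implicit. Unset Printing Implicit Defensive.

Lemma K33_of_bipartition (T : finType) (adj : rel T) (A : {set T}) :
  #|A| = 3 -> #|~: A| = 3 -> (forall x y, adj x y = ((x \in A) != (y \in A))) ->
  isomorphic adj K33_adj.
Proof.
move=> cardA cardAc adjE.
pose g (p : bool * 'I_3) : T :=
  if p.1 then enum_val (cast_ord (esym cardA) p.2)
  else enum_val (cast_ord (esym cardAc) p.2).
have gA p : (g p \in A) = p.1.
  case: p => [[] i]; rewrite /g /=; first exact: enum_valP.
  by apply/negbTE; rewrite -in_setC; apply: enum_valP.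
have g_inj : injective g.
  move=> [b i] [c j] eq_g; have eq_bc : b = c by rewrite -[b](gA (b, i)) eq_g gA.
  by subst c; case: b eq_g; rewrite /g /= => /enum_val_inj/cast_ord_inj ->.
have [h gK hK] : bijective g.
  apply: (inj_card_bij g_inj).
  by rewrite card_prod card_bool card_ord -(cardsC A) cardA cardAc.
exists h; split; first by exists g.
by move=> x y; rewrite adjE -{2}(hK x) -{2}(hK y) !gA.
Qed.

Lemma tdseq_size_le_gamma (T : finType) (adj : rel T) (s : seq T) :
  total_dominating_seq adj s -> size s <= gamma_grt adj.
Proof.
move=> td_s; have /andP[/andP[uniq_s _] _] := td_s.
have size_s : size s < #|T|.+1 by rewrite ltnS -(card_uniqP uniq_s) max_card.
apply: (@leq_bigmax_cond _ _ (fun k : 'I_#|T|.+1 => nat_of_ord k) (Ordinal size_s)).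
by apply/existsP; exists (in_tuple s).
Qed.

Section CubicGraph.
Variable T : finType.
Variable adj : rel T.
Hypothesis adj_sym : symmetric adj.
Hypothesis adj_irr : irreflexive adj.
Hypothesis adj_conn : connected_graph adj.
Hypothesis adj_cubic : cubic adj.

Local Notation N := (N adj).
Local Notation NU := (NU adj).

Lemma inN x y : (y \in N x) = adj x y.
Proof. by rewrite inE. Qed.

Lemma N_neq0 x : N x != set0.
Proof. by rewrite -card_gt0 adj_cubic. Qed.

Lemma connected_closed (P : pred T) :
  (forall x y, adj x y -> P x -> P y) -> forall x y, P x -> P y.
Proof.
move=> P_adj x y; have P_closed : closed adj P.
  by move=> u v uv; apply/idP/idP; apply: P_adj; rewrite // adj_sym.
by have := closed_connect P_closed (adj_conn x y); rewrite !unfold_in => ->.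
Qed.

Definition undominated (s : seq T) : {set T} := ~: NU s.

Lemma undominated_nil : undominated [::] = setT.
Proof. by rewrite /undominated /Defs.NU big_nil setC0. Qed.

Lemma undominated_rcons s v : undominated (rcons s v) = undominated s :\: N v.
Proof. by rewrite /undominated /Defs.NU big_rcons /= setCU setDE. Qed.

Lemma N_sub_NU s v : v \in s -> N v \subset NU s.
Proof. by move=> v_s; rewrite /Defs.NU bigcup_seq (bigcup_sup v). Qed.

Lemma legal_rcons s v :
  legal_seq adj s -> N v :&: undominated s != set0 -> legal_seq adj (rcons s v).
Proof.
move=> /andP[uniq_s /forallP legal_s] hit_v.
have v_s : v \notin s.
  by apply: contra hit_v => /N_sub_NU; rewrite /undominated -setDE setD_eq0.
rewrite /legal_seq rcons_uniq v_s uniq_s; apply/forallP => i; apply/implyP => i_gt0.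
rewrite (tnth_nth v) /=; have := ltn_ord i; move: (nat_of_ord i) i_gt0 => k k_gt0.
rewrite size_rcons ltnS leq_eqVlt nth_rcons -cats1 => /orP[/eqP-> | k_lt].
  by rewrite ltnn eqxx take_size_cat // setDE; exact: hit_v.
rewrite k_lt takel_cat ?(ltnW k_lt) //.
by have := legal_s (Ordinal k_lt); rewrite k_gt0 (tnth_nth v).
Qed.

Lemma tdseq_undominated s :
  legal_seq adj s -> undominated s = set0 -> total_dominating_seq adj s.
Proof.
move=> legal_s dom_s; rewrite /total_dominating_seq legal_s; apply/forallP => x.
have : x \in NU s by rewrite -[_ \in _]negbK -in_setC -/(undominated s) dom_s inE.
rewrite /Defs.NU bigcup_seq => /bigcupP[u u_s]; rewrite inN => ux.
by apply/existsP; exists u; rewrite inE u_s adj_sym.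
Qed.

Lemma greedy_step s v : legal_seq adj s -> 0 < #|N v :&: undominated s| ->
  legal_seq adj (rcons s v) /\
  #|undominated (rcons s v)| = #|undominated s| - #|N v :&: undominated s|.
Proof.
move=> legal_s; rewrite card_gt0 => hit_v; split; first exact: legal_rcons.
by rewrite undominated_rcons cardsD setIC.
Qed.


Lemma undominated_neq_setT s : 0 < size s -> undominated s != setT.
Proof.
case: s => // x s _; have [y xy] := set0Pn _ (N_neq0 x).
apply/negP => /eqP dom_s; have : y \in undominated (x :: s) by rewrite dom_s inE.
by rewrite inE (subsetP (N_sub_NU (mem_head x s))).
Qed.

Definition stuck (U : {set T}) : bool :=
  (U != set0) && [forall v, (N v \subset U) || [disjoint N v & U]].

Lemma stuck_nbhd_sub U x z : stuck U -> adj x z -> (N z \subset U) = (x \in U).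
Proof.
move=> /andP[_ /forallP /(_ z) split_z] xz; have x_Nz : x \in N z by rewrite inN adj_sym.
apply/idP/idP => [/subsetP/(_ x x_Nz) // | x_U].
by case/orP: split_z => // /disjointFr/(_ x_Nz); rewrite x_U.
Qed.

Lemma stuck_nbhd_subC U v : stuck U -> U != setT -> (N v \subset U) = (v \notin U).
Proof.
move=> stuck_U U_T.
pose g w := (N w \subset U) == (w \notin U).
have g_adj x z : adj x z -> g x = g z.
  move=> xz; have zx : adj z x by rewrite adj_sym.
  rewrite /g (stuck_nbhd_sub stuck_U xz) (stuck_nbhd_sub stuck_U zx).
  by case: (x \in U); case: (z \in U).
apply/eqP; apply/negPn/negP => g_v.
have not_g w : ~~ g w.
  by apply: (connected_closed (P := fun w => ~~ g w) _ w g_v) => x z /g_adj ->.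
have U_adj x z : adj x z -> x \in U -> z \in U.
  move=> xz; have zx : adj z x by rewrite adj_sym.
  have := not_g x; rewrite /g -(stuck_nbhd_sub stuck_U zx).
  by case: (N x \subset U); case: (x \in U).
case/andP: stuck_U => /set0Pn[u u_U] _; case/negP: U_T; apply/eqP/setP => y.
by rewrite inE; apply: (connected_closed (P := mem U) U_adj y u_U).
Qed.

Lemma stuck_sub_eq U W : stuck U -> U != setT -> stuck W -> W \subset U -> W = U.
Proof.
move=> stuck_U U_T stuck_W W_U; apply/eqP; rewrite eqEsubset W_U /=.
apply/subsetP => z z_U; apply/negPn/negP => z_W.
have W_T : W != setT by apply: contraNneq z_W => ->; rewrite inE.
have : N z \subset U by apply: subset_trans W_U; rewrite stuck_nbhd_subC.
by rewrite stuck_nbhd_subC // z_U.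
Qed.

Lemma unstuck_partial_hit U : U != set0 -> ~~ stuck U -> exists v, 0 < #|N v :&: U| < 3.
Proof.
rewrite /stuck => -> /forallPn[v]; rewrite negb_or => /andP[not_sub not_disj].
exists v; rewrite card_gt0 setI_eq0 not_disj -(adj_cubic v) proper_card //.
by rewrite properEneq subsetIl andbT; apply: contraNneq not_sub => <-; rewrite subsetIr.
Qed.

Lemma K33_of_nbhds (A B : {set T}) a : a \in A ->
  {in A, forall x, N x = B} -> {in B, forall y, N y = A} -> isomorphic adj K33_adj.
Proof.
move=> a_A NA NB.
have AB_disj x : x \in A -> x \in B -> False.
  by move=> x_A x_B; have := adj_irr x; rewrite -inN NA // x_B.
have cover y : (y \in A) || (y \in B).
  have a_AB : (a \in A) || (a \in B) by rewrite a_A.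
  apply: (connected_closed (P := fun y => (y \in A) || (y \in B)) _ y a_AB).
  by move=> x z xz /orP[/NA|/NB] N_x; move: xz; rewrite -inN N_x => ->; rewrite ?orbT.
have B_def : B = ~: A.
  apply/setP => y; rewrite inE; case y_A: (y \in A).
    by apply/negP => /(AB_disj y y_A).
  by have := cover y; rewrite y_A.
have [b b_B] : exists b, b \in B by apply/set0Pn; rewrite -(NA a a_A) N_neq0.
apply: (@K33_of_bipartition _ _ A).
- by rewrite -(NB b b_B) adj_cubic.
- by rewrite -B_def -(NA a a_A) adj_cubic.
move=> x y; rewrite -inN; case x_A: (x \in A).
  by rewrite (NA x x_A) B_def inE.
have x_B : x \in B by rewrite B_def inE x_A.
by rewrite (NB x x_B); case: (y \in A).
Qed.

Lemma stuck_card3_K33 U : stuck U -> U != setT -> #|U| = 3 -> isomorphic adj K33_adj.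
Proof.
move=> stuck_U U_T card_U.
have N_out x : x \notin U -> N x = U.
  by move=> x_U; apply/eqP; rewrite eqEcard card_U adj_cubic leqnn andbT stuck_nbhd_subC.
have [a a_U] : exists a, a \in ~: U.
  by apply/set0Pn; apply: contraNneq U_T => UC0; rewrite -[U]setCK UC0 setC0.
apply: (@K33_of_nbhds (~: U) U a a_U) => [x | y y_U]; first by rewrite inE => /N_out.
apply/setP => z; rewrite !inE; apply/idP/idP => [yz | z_U].
  by rewrite -(stuck_nbhd_subC _ stuck_U U_T) (stuck_nbhd_sub stuck_U yz) y_U.
by rewrite adj_sym -inN N_out.
Qed.

Definition twin_free : bool := injectiveb N.

Lemma twin_free_single_hit (U : {set T}) :
  twin_free -> 0 < #|U| <= 2 -> exists v, #|N v :&: U| = 1.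
Proof.
move=> /injectiveP N_inj /andP[U_gt0 U_le2].
case: (boolP [exists v, #|N v :&: U| == 1]) => [/existsP[v /eqP]|]; first by exists v.
move/existsPn => no_single; exfalso.
have [u u_U] : exists u, u \in U by apply/set0Pn; rewrite -card_gt0.
have U_sub w : w \in N u -> U \subset N w.
  move=> uw; have w_u : u \in N w by rewrite inN adj_sym -inN.
  have hit_w : 0 < #|N w :&: U| by rewrite card_gt0; apply/set0Pn; exists u; rewrite inE w_u.
  have := no_single w; have := subset_leq_card (subsetIr (N w) U) => le_U ne1.
  by apply/setIidPr/eqP; rewrite eqEcard subsetIr /=; lia.
have [w uw] := set0Pn _ (N_neq0 u).
have [u' u'_U] : exists u', u' \in U :\ u.
  apply/set0Pn; rewrite -card_gt0; have := cardsD1 u U; rewrite u_U.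
  by have := no_single w; rewrite (setIidPr (U_sub w uw)); lia.
have Nu_sub : N u \subset N u'.
  apply/subsetP => z uz; move/setD1P: u'_U => [_ /(subsetP (U_sub z uz))].
  by rewrite !inN adj_sym.
have : N u = N u' by apply/eqP; rewrite eqEcard Nu_sub !adj_cubic.
by move/N_inj => u_u'; move: u'_U; rewrite u_u' setD11.
Qed.

Lemma twins_common_pair : ~~ twin_free -> ~ isomorphic adj K33_adj ->
  exists x y, #|N x :&: N y| = 2.
Proof.
case/injectivePn => a [b ab Nab] not_K33.
case: (boolP [exists x in N a, exists y in N a, N x != N y]) => [|same].
  case/existsP => x /andP[xa /existsP[y /andP[ya Nxy]]]; exists x, y.
  have ab_sub : [set a; b] \subset N x :&: N y.
    apply/subsetP => z; rewrite !inE => /orP[]/eqP->.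
      by rewrite (adj_sym x) (adj_sym y) -!inN xa ya.
    by rewrite (adj_sym x) (adj_sym y) -!inN -Nab xa ya.
  have := subset_leq_card ab_sub; rewrite cards2 ab => ge2.
  have le3 : #|N x :&: N y| <= 3 by rewrite -(adj_cubic x) subset_leq_card ?subsetIl.
  suff : #|N x :&: N y| != 3 by lia.
  apply: contra Nxy => /eqP card3.
  have Ex : N x :&: N y = N x by apply/eqP; rewrite eqEcard subsetIl card3 adj_cubic.
  have Ey : N x :&: N y = N y by apply/eqP; rewrite eqEcard subsetIr card3 adj_cubic.
  by rewrite -Ex Ey.
exfalso; apply: not_K33.
have {}same : {in N a &, forall x y, N x = N y}.
  move=> x y xa ya; apply/eqP; apply: contraNT same => Nxy.
  by apply/existsP; exists x; rewrite xa; apply/existsP; exists y; rewrite ya.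
have [x1 x1a] := set0Pn _ (N_neq0 a).
apply: (@K33_of_nbhds (N a) (N x1) x1 x1a) => [x xa | y yx1]; first exact: same.
apply/esym/eqP; rewrite eqEcard !adj_cubic leqnn andbT.
by apply/subsetP => w wa; rewrite inN adj_sym -inN (same w x1).
Qed.

Lemma sum_card_N_even : ~~ odd (\sum_x #|N x|).
Proof.
pose P := [set p : T * T | adj p.1 p.2].
have card_P : \sum_x #|N x| = #|P|.
  rewrite (eq_bigr (fun x => \sum_(y | adj x y) 1)) => [|x _]; last first.
    by rewrite -sum1_card; apply: eq_bigl => y; rewrite inE.
  by rewrite pair_big_dep /= -sum1_card; apply: eq_bigl => p; rewrite inE.
pose P1 := [set p in P | enum_rank p.1 < enum_rank p.2].
pose swap (p : T * T) := (p.2, p.1).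
have swap_inj : injective swap by move=> [x y] [x' y'] [-> ->].
have P_split : P = P1 :|: swap @^-1: P1.
  apply/setP => -[x y]; rewrite !inE /= (adj_sym y x).
  case: (boolP (adj x y)) => //= xy.
  have : enum_rank x != enum_rank y.
    by apply: contraTneq xy => /enum_rank_inj ->; rewrite adj_irr.
  by rewrite neq_ltn => /orP[] ->; rewrite ?orbT.
have P_disj : P1 :&: swap @^-1: P1 = set0.
  apply/setP => -[x y]; rewrite !inE /=.
  by case: (ltngtP (enum_rank x) (enum_rank y)); rewrite ?andbF.
by rewrite card_P P_split cardsU P_disj cards0 card_preimset // subn0 addnn odd_double.
Qed.

Lemma card_even : ~~ odd #|T|.
Proof.
have := sum_card_N_even; rewrite (eq_bigr (fun=> 3)) => [|x _]; last exact: adj_cubic.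
by rewrite sum_nat_const cardT -cardE oddM andbT.
Qed.

Lemma bound_unstuck s : legal_seq adj s -> undominated s != set0 ->
  (forall W : {set T}, W \subset undominated s -> ~~ stuck W) ->
  2 * size s + #|undominated s| + twin_free <= 2 * gamma_grt adj.
Proof.
have [m] := ubnP #|undominated s|; elim: m s => // m IH s.
set U := undominated s => U_lt legal_s U_0 unstuck_U.
have [v /andP[hit_v hit_lt3] hit_single] : exists2 v, 0 < #|N v :&: U| < 3 &
    twin_free -> #|U| <= 2 -> #|N v :&: U| = 1.
  case: (boolP (twin_free && (#|U| <= 2))) => [/andP[tf U_le2] | not_small].
    have U_small : 0 < #|U| <= 2 by rewrite card_gt0 U_0.
    have [v hit1] := twin_free_single_hit tf U_small.
    by exists v; rewrite hit1.
  have [v hit_v] := unstuck_partial_hit U_0 (unstuck_U U (subxx U)).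
  by exists v => // tf U_le2; case/negP: not_small; rewrite tf.
have [legal_sv card_U'] := greedy_step legal_s hit_v; rewrite -/U in card_U'.
have hit_le : #|N v :&: U| <= #|U| by rewrite subset_leq_card ?subsetIr.
have [U'0 | U'_0] := eqVneq (undominated (rcons s v)) set0.
  have := tdseq_size_le_gamma (tdseq_undominated legal_sv U'0).
  move: card_U'; rewrite U'0 cards0 size_rcons.
  by move: hit_single; case: twin_free => [/(_ isT)|_] /=; lia.
have U'_sub : undominated (rcons s v) \subset U by rewrite undominated_rcons subsetDl.
have U'_lt : #|undominated (rcons s v)| < m by rewrite card_U'; lia.
have := IH _ U'_lt legal_sv U'_0 (fun W W_U' => unstuck_U W (subset_trans W_U' U'_sub)).
by rewrite size_rcons card_U'; lia.
Qed.

Lemma bound_greedy s : ~ isomorphic adj K33_adj -> legal_seq adj s -> 0 < size s ->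
  2 * size s + #|undominated s| + twin_free <= (2 * gamma_grt adj).+1.
Proof.
move=> not_K33; have [m] := ubnP #|undominated s|; elim: m s => // m IH s.
set U := undominated s => U_lt legal_s s_gt0.
have [U0|U_0] := eqVneq U set0.
  have := tdseq_size_le_gamma (tdseq_undominated legal_s U0).
  by rewrite U0 cards0; case: twin_free => /=; lia.
have U_T : U != setT := undominated_neq_setT s_gt0.
case: (boolP (stuck U)) => [stuck_U | unstuck_U].
  have [u u_U] := set0Pn _ U_0; have [v uv] := set0Pn _ (N_neq0 u); rewrite inN in uv.
  have Nv_U : N v \subset U by rewrite (stuck_nbhd_sub stuck_U uv).
  have hit3 : #|N v :&: U| = 3 by rewrite (setIidPl Nv_U) adj_cubic.
  have hit_gt0 : 0 < #|N v :&: U| by rewrite hit3.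
  have [legal_sv card_U'] := greedy_step legal_s hit_gt0.
  rewrite -/U hit3 in card_U'.
  have U'_0 : undominated (rcons s v) != set0.
    apply/negP => /eqP U'0; apply: not_K33; apply: stuck_card3_K33 stuck_U U_T _.
    by move: card_U'; have := subset_leq_card Nv_U; rewrite U'0 cards0 adj_cubic; lia.
  have unstuck_U' (W : {set T}) : W \subset undominated (rcons s v) -> ~~ stuck W.
    move=> W_U'; apply/negP => stuck_W.
    have W_U : W \subset U by apply: subset_trans W_U' _; rewrite undominated_rcons subsetDl.
    move: W_U'; rewrite (stuck_sub_eq stuck_U U_T stuck_W W_U) => /subsetP/(_ u u_U).
    by rewrite undominated_rcons !inE adj_sym uv.
  have := bound_unstuck legal_sv U'_0 unstuck_U'.
  by rewrite size_rcons card_U'; lia.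
have [v /andP[hit_v hit_lt3]] := unstuck_partial_hit U_0 unstuck_U.
have [legal_sv card_U'] := greedy_step legal_s hit_v; rewrite -/U in card_U'.
have hit_le : #|N v :&: U| <= #|U| by rewrite subset_leq_card ?subsetIr.
have U'_lt : #|undominated (rcons s v)| < m by rewrite card_U'; lia.
have := IH (rcons s v) U'_lt legal_sv; rewrite size_rcons card_U' => /(_ isT); lia.
Qed.

Lemma start_seq (x0 : T) : ~ isomorphic adj K33_adj -> exists s,
  [/\ legal_seq adj s, 0 < size s & #|T| <= 2 * size s + #|undominated s| + twin_free].
Proof.
move=> not_K33.
have legal_nil : legal_seq adj [::] by apply/andP; split => //; apply/forallP => -[].
have legal_1 x : legal_seq adj (rcons [::] x).
  by apply: legal_rcons legal_nil _; rewrite undominated_nil setIT N_neq0.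
case: (boolP twin_free) => [_ | /twins_common_pair/(_ not_K33) [x [y xy2]]].
  exists (rcons [::] x0); split => //.
  have := cardsC (N x0); rewrite undominated_rcons undominated_nil setTD adj_cubic.
  by rewrite /=; lia.
have Ny_Nx : #|N y :\: N x| = 1 by rewrite cardsD setIC xy2 adj_cubic.
exists (rcons (rcons [::] x) y); split => //.
  apply: legal_rcons (legal_1 x) _.
  by rewrite undominated_rcons undominated_nil setTD -setDE -card_gt0 Ny_Nx.
have := cardsC (N x :|: N y).
rewrite !undominated_rcons undominated_nil setTD setDE -setCU cardsU !adj_cubic xy2.
by rewrite /=; lia.
Qed.

End CubicGraph.

Theorem mainTheorem15 (T : finType) (adj : rel T) :
  simple_graph adj -> connected_graph adj -> cubic adj ->
  ~ isomorphic adj K33_adj ->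
  #|T| <= 2 * gamma_grt adj.
Proof.
move=> [adj_sym adj_irr] adj_conn adj_cubic not_K33.
have [x0 _ | T0] := pickP (@predT T); last by rewrite eq_card0.
have [s [legal_s s_gt0 card_s]] := start_seq adj_sym adj_irr adj_conn adj_cubic x0 not_K33.
have := bound_greedy adj_sym adj_irr adj_conn adj_cubic not_K33 legal_s s_gt0.
by rewrite -(even_halfK (card_even adj_sym adj_irr adj_cubic)) -mul2n in card_s *; lia.
Qed.
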